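(* Let $\mathcal{C}$ be a category with finite limits and coequalizers, let $Q$ be an internal groupoid in $\mathcal{C}$, and let $M$ be a $Q$-module. Then $p^{(1)}E^{(2)}_{\mathcal{C}}(Q,M)=\mathrm{d}(pQ)$, the discrete internal groupoid on $pQ$.
   Context: $\mathsf{Gpd}\,\mathcal{C}$ denotes internal groupoids in $\mathcal{C}$; for $A\in\mathsf{Gpd}\,\mathcal{C}$, $pA$ is the coequalizer in $\mathcal{C}$ of the source and target maps $A_1\rightrightarrows A_0$. For an object $G$ of $\mathsf{Gpd}(\mathsf{Gpd}\,\mathcal{C})$, i.e. a simplicial object $k\mapsto G_k$ in $\mathsf{Gpd}\,\mathcal{C}$ satisfying the groupoid (Segal) conditions, $p^{(1)}G\in\mathsf{Gpd}\,\mathcal{C}$ is obtained by applying $p$ to each $G_k$. For $S\in\mathcal{C}$, $\mathrm{d}S$ is the internal groupoid with objects and arrows both $S$ and all structure maps identities. A $Q$-module is an abelian group object $M$ in the category $(\mathsf{Gpd}\,\mathcal{C},Q_0)/Q$ of internal groupoids with object of objects $Q_0$ and identity-on-objects internal functors, over $Q$: it is given by an internal functor $\rho:M\to Q$ which is the identity on objects, a unit section $\phi:Q\to M$ with $\rho\phi=\mathrm{Id}$, an associative, commutative, unital multiplication $\mu:M\times_QM\to M$ over $Q$, and an inverse $i:M\to M$ over $Q$, satisfying the usual abelian group axioms. $E^{(2)}_{\mathcal{C}}(Q,M)\in\mathsf{Gpd}(\mathsf{Gpd}\,\mathcal{C})$ is the internal groupoid in $\mathsf{Gpd}\,\mathcal{C}$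 with object of objects $Q$, object of arrows $M$, source and target both equal to $\rho$, identity $\phi$, composition $\mu:M\times_QM\to M$ (and inverses given by $i$); its simplicial levels are $Q$, $M$, $M\times_QM$, $\dots$. *)

Set Implicit Arguments.
Unset Strict Implicit.

Record Category := {
  Ob :> Type;
  Hom : Ob -> Ob -> Type;
  idm : forall X, Hom X X;
  comp : forall X Y Z, Hom Y Z -> Hom X Y -> Hom X Z;
  comp_assoc : forall W X Y Z (h : Hom Y Z) (g : Hom X Y) (f : Hom W X),
      comp h (comp g f) = comp (comp h g) f;
  comp_id_l : forall X Y (f : Hom X Y), comp (idm Y) f = f;
  comp_id_r : forall X Y (f : Hom X Y), comp f (idm X) = f }.

Arguments idm {c} X.
Notation "g ⊚ f" := (comp g f) (at level 40, left associativity).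

Definition is_iso (C : Category) (X Y : C) (f : Hom X Y) : Prop :=
  exists g : Hom Y X, g ⊚ f = idm X /\ f ⊚ g = idm Y.

Record Terminal (C : Category) := {
  term : C;
  term_map : forall X : C, Hom X term;
  term_uniq : forall (X : C) (f : Hom X term), f = term_map X }.

Record Pullback (C : Category) (X Y Z : C) (f : Hom X Z) (g : Hom Y Z) := {
  pb : C;
  pb1 : Hom pb X;
  pb2 : Hom pb Y;
  pb_comm : f ⊚ pb1 = g ⊚ pb2;
  pb_univ : forall (W : C) (a : Hom W X) (b : Hom W Y), f ⊚ a = g ⊚ b ->
      exists! u : Hom W pb, pb1 ⊚ u = a /\ pb2 ⊚ u = b }.

Record Coequalizer (C : Category) (X Y : C) (f g : Hom X Y) := {
  coeq : C;
  coeq_map : Hom Y coeq;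
  coeq_comm : coeq_map ⊚ f = coeq_map ⊚ g;
  coeq_desc : forall (W : C) (h : Hom Y W), h ⊚ f = h ⊚ g -> Hom coeq W;
  coeq_desc_comm : forall (W : C) (h : Hom Y W) (H : h ⊚ f = h ⊚ g),
      coeq_desc H ⊚ coeq_map = h;
  coeq_uniq : forall (W : C) (u v : Hom coeq W),
      u ⊚ coeq_map = v ⊚ coeq_map -> u = v }.

(* finite limits = terminal object + pullbacks *)
Record FinLimCoeq (C : Category) := {
  flc_term : Terminal C;
  flc_pb : forall (X Y Z : C) (f : Hom X Z) (g : Hom Y Z), Pullback f g;
  flc_coeq : forall (X Y : C) (f g : Hom X Y), Coequalizer f g }.

Section Internal.
Variable C : Category.
Variable L : FinLimCoeq C.

Definition PB (X Y Z : C) (f : Hom X Z) (g : Hom Y Z) : Pullback f g :=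
  flc_pb L f g.

(* ---------- Internal groupoids with a given object of objects O ----------
   Axioms are stated with generalized elements W -> _ (equivalent, by the
   universal property of pullbacks, to the usual diagrammatic axioms). *)
Record IGpdOn (O : C) := {
  ar : C;
  src : Hom ar O;
  tgt : Hom ar O;
  idn : Hom O ar;
  inv : Hom ar ar;
  cmp : Hom (pb (PB tgt src)) ar;
  src_idn : src ⊚ idn = idm O;
  tgt_idn : tgt ⊚ idn = idm O;
  src_cmp : src ⊚ cmp = src ⊚ pb1 (PB tgt src);
  tgt_cmp : tgt ⊚ cmp = tgt ⊚ pb2 (PB tgt src);
  cmp_idl : forall (W : C) (a : Hom W ar) (u : Hom W (pb (PB tgt src))),
      pb1 (PB tgt src) ⊚ u = idn ⊚ (src ⊚ a) -> pb2 (PB tgt src) ⊚ u = a ->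
      cmp ⊚ u = a;
  cmp_idr : forall (W : C) (a : Hom W ar) (u : Hom W (pb (PB tgt src))),
      pb1 (PB tgt src) ⊚ u = a -> pb2 (PB tgt src) ⊚ u = idn ⊚ (tgt ⊚ a) ->
      cmp ⊚ u = a;
  cmp_assoc : forall (W : C) (a b c : Hom W ar) (u v w x : Hom W (pb (PB tgt src))),
      pb1 (PB tgt src) ⊚ u = a -> pb2 (PB tgt src) ⊚ u = b ->
      pb1 (PB tgt src) ⊚ v = cmp ⊚ u -> pb2 (PB tgt src) ⊚ v = c ->
      pb1 (PB tgt src) ⊚ w = b -> pb2 (PB tgt src) ⊚ w = c ->
      pb1 (PB tgt src) ⊚ x = a -> pb2 (PB tgt src) ⊚ x = cmp ⊚ w ->
      cmp ⊚ v = cmp ⊚ x;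
  src_inv : src ⊚ inv = tgt;
  tgt_inv : tgt ⊚ inv = src;
  cmp_invr : forall (W : C) (a : Hom W ar) (u : Hom W (pb (PB tgt src))),
      pb1 (PB tgt src) ⊚ u = a -> pb2 (PB tgt src) ⊚ u = inv ⊚ a ->
      cmp ⊚ u = idn ⊚ (src ⊚ a);
  cmp_invl : forall (W : C) (a : Hom W ar) (u : Hom W (pb (PB tgt src))),
      pb1 (PB tgt src) ⊚ u = inv ⊚ a -> pb2 (PB tgt src) ⊚ u = a ->
      cmp ⊚ u = idn ⊚ (tgt ⊚ a) }.

Record IOFunctor (O : C) (A B : IGpdOn O) := {
  fmap : Hom (ar A) (ar B);
  f_src : src B ⊚ fmap = src A;
  f_tgt : tgt B ⊚ fmap = tgt A;
  f_idn : fmap ⊚ idn A = idn B;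
  f_cmp : forall (W : C) (u : Hom W (pb (PB (tgt A) (src A))))
                 (v : Hom W (pb (PB (tgt B) (src B)))),
      pb1 (PB (tgt B) (src B)) ⊚ v = fmap ⊚ (pb1 (PB (tgt A) (src A)) ⊚ u) ->
      pb2 (PB (tgt B) (src B)) ⊚ v = fmap ⊚ (pb2 (PB (tgt A) (src A)) ⊚ u) ->
      cmp B ⊚ v = fmap ⊚ (cmp A ⊚ u) }.

(* ---------- Q-modules: abelian group objects in (Gpd C, Q0)/Q ----------
   M x_Q M is the groupoid on O whose object of arrows is the pullback K of
   (rho_1, rho_1); its source/target are src M o k1 (= src M o k2 etc.), its
   identities and composition are componentwise.  The group law mu : M x_Q M -> M
   is an identity-on-objects functor over Q; the unit of the slice is phi o rho. *)
Record QModule (O : C) (Q : IGpdOn O) := {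
  Mod : IGpdOn O;
  rho : IOFunctor Mod Q;
  phi : IOFunctor Q Mod;
  rho_phi : fmap rho ⊚ fmap phi = idm (ar Q);
  mu : Hom (pb (PB (fmap rho) (fmap rho))) (ar Mod);
  minv : IOFunctor Mod Mod;
  mu_src : src Mod ⊚ mu = src Mod ⊚ pb1 (PB (fmap rho) (fmap rho));
  mu_tgt : tgt Mod ⊚ mu = tgt Mod ⊚ pb1 (PB (fmap rho) (fmap rho));
  mu_over : fmap rho ⊚ mu = fmap rho ⊚ pb1 (PB (fmap rho) (fmap rho));
  mu_idn : forall (W : C) (x : Hom W O) (u : Hom W (pb (PB (fmap rho) (fmap rho)))),
      pb1 (PB (fmap rho) (fmap rho)) ⊚ u = idn Mod ⊚ x ->
      pb2 (PB (fmap rho) (fmap rho)) ⊚ u = idn Mod ⊚ x ->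
      mu ⊚ u = idn Mod ⊚ x;
  mu_cmp : forall (W : C) (x y z : Hom W (pb (PB (fmap rho) (fmap rho))))
                  (z1 z2 z3 : Hom W (pb (PB (tgt Mod) (src Mod)))),
      pb1 (PB (tgt Mod) (src Mod)) ⊚ z1 = pb1 (PB (fmap rho) (fmap rho)) ⊚ x ->
      pb2 (PB (tgt Mod) (src Mod)) ⊚ z1 = pb1 (PB (fmap rho) (fmap rho)) ⊚ y ->
      pb1 (PB (tgt Mod) (src Mod)) ⊚ z2 = pb2 (PB (fmap rho) (fmap rho)) ⊚ x ->
      pb2 (PB (tgt Mod) (src Mod)) ⊚ z2 = pb2 (PB (fmap rho) (fmap rho)) ⊚ y ->
      pb1 (PB (fmap rho) (fmap rho)) ⊚ z = cmp Mod ⊚ z1 ->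
      pb2 (PB (fmap rho) (fmap rho)) ⊚ z = cmp Mod ⊚ z2 ->
      pb1 (PB (tgt Mod) (src Mod)) ⊚ z3 = mu ⊚ x ->
      pb2 (PB (tgt Mod) (src Mod)) ⊚ z3 = mu ⊚ y ->
      mu ⊚ z = cmp Mod ⊚ z3;
  minv_over : fmap rho ⊚ fmap minv = fmap rho;
  mu_assoc : forall (W : C) (a b c : Hom W (ar Mod))
                    (x y z w : Hom W (pb (PB (fmap rho) (fmap rho)))),
      pb1 (PB (fmap rho) (fmap rho)) ⊚ x = a -> pb2 (PB (fmap rho) (fmap rho)) ⊚ x = b ->
      pb1 (PB (fmap rho) (fmap rho)) ⊚ y = mu ⊚ x -> pb2 (PB (fmap rho) (fmap rho)) ⊚ y = c ->
      pb1 (PB (fmap rho) (fmap rho)) ⊚ z = b -> pb2 (PB (fmap rho) (fmap rho)) ⊚ z = c ->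
      pb1 (PB (fmap rho) (fmap rho)) ⊚ w = a -> pb2 (PB (fmap rho) (fmap rho)) ⊚ w = mu ⊚ z ->
      mu ⊚ y = mu ⊚ w;
  mu_comm : forall (W : C) (x y : Hom W (pb (PB (fmap rho) (fmap rho)))),
      pb1 (PB (fmap rho) (fmap rho)) ⊚ x = pb2 (PB (fmap rho) (fmap rho)) ⊚ y ->
      pb2 (PB (fmap rho) (fmap rho)) ⊚ x = pb1 (PB (fmap rho) (fmap rho)) ⊚ y ->
      mu ⊚ x = mu ⊚ y;
  mu_unit : forall (W : C) (a : Hom W (ar Mod)) (x : Hom W (pb (PB (fmap rho) (fmap rho)))),
      pb1 (PB (fmap rho) (fmap rho)) ⊚ x = fmap phi ⊚ (fmap rho ⊚ a) ->
      pb2 (PB (fmap rho) (fmap rho)) ⊚ x = a ->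
      mu ⊚ x = a;
  mu_invr : forall (W : C) (a : Hom W (ar Mod)) (x : Hom W (pb (PB (fmap rho) (fmap rho)))),
      pb1 (PB (fmap rho) (fmap rho)) ⊚ x = a ->
      pb2 (PB (fmap rho) (fmap rho)) ⊚ x = fmap minv ⊚ a ->
      mu ⊚ x = fmap phi ⊚ (fmap rho ⊚ a) }.

Definition pCoeq (O : C) (A : IGpdOn O) := flc_coeq L (src A) (tgt A).
Definition pOb (O : C) (A : IGpdOn O) : C := coeq (pCoeq A).

(* For an identity-on-objects functor F : A -> B, p F : p A -> p B is the unique
   map with  p F o q_A = q_B o F_0 = q_B  (F_0 = id). *)
Lemma io_coeq_eq (O : C) (A B : IGpdOn O) (F : IOFunctor A B) :
  coeq_map (pCoeq B) ⊚ src A = coeq_map (pCoeq B) ⊚ tgt A.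
Proof.
  rewrite <- (f_src F), <- (f_tgt F), !comp_assoc, (coeq_comm (pCoeq B)).
  reflexivity.
Qed.

Definition pmap (O : C) (A B : IGpdOn O) (F : IOFunctor A B) :
  Hom (pOb A) (pOb B) := coeq_desc (pCoeq A) (io_coeq_eq F).

Section Level2.
Variables (O : C) (Q : IGpdOn O) (M : QModule Q).

(* level 2 of E^{(2)}(Q,M): M x_Q M, with source/target src M o k1, tgt M o k1 *)
Definition KPB := PB (fmap (rho M)) (fmap (rho M)).
Definition pKCoeq :=
  flc_coeq L (src (Mod M) ⊚ pb1 KPB) (tgt (Mod M) ⊚ pb1 KPB).
Definition pK : C := coeq pKCoeq.

Lemma K_coeq_eq :
  coeq_map (pCoeq (Mod M)) ⊚ (src (Mod M) ⊚ pb1 KPB)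
  = coeq_map (pCoeq (Mod M)) ⊚ (tgt (Mod M) ⊚ pb1 KPB).
Proof. rewrite !comp_assoc, (coeq_comm (pCoeq (Mod M))). reflexivity. Qed.

(* p applied to any identity-on-objects functor M x_Q M -> M (mu, pi_1, pi_2):
   the unique map h with h o q_{M x_Q M} = q_M (object component = id).
   Hence p(mu) = p(pi_1) = p(pi_2) = pK_to_pM. *)
Definition pK_to_pM : Hom pK (pOb (Mod M)) := coeq_desc pKCoeq K_coeq_eq.
Definition p_mu := pK_to_pM.
Definition p_pi1 := pK_to_pM.
Definition p_pi2 := pK_to_pM.
End Level2.

Record GData := {
  D0 : C; D1 : C; D2 : C;
  ds : Hom D1 D0; dt : Hom D1 D0; de : Hom D0 D1; di : Hom D1 D1;
  dm : Hom D2 D1; dp1 : Hom D2 D1; dp2 : Hom D2 D1 }.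

Definition GIso (X Y : GData) : Prop :=
  exists (f0 : Hom (D0 X) (D0 Y)) (f1 : Hom (D1 X) (D1 Y)) (f2 : Hom (D2 X) (D2 Y)),
    is_iso f0 /\ is_iso f1 /\ is_iso f2 /\
    f0 ⊚ ds X = ds Y ⊚ f1 /\ f0 ⊚ dt X = dt Y ⊚ f1 /\
    f1 ⊚ de X = de Y ⊚ f0 /\ f1 ⊚ di X = di Y ⊚ f1 /\
    f1 ⊚ dm X = dm Y ⊚ f2 /\ f1 ⊚ dp1 X = dp1 Y ⊚ f2 /\ f1 ⊚ dp2 X = dp2 Y ⊚ f2.

Definition discrete (S : C) : GData :=
  {| D0 := S; D1 := S; D2 := S;
     ds := idm S; dt := idm S; de := idm S; di := idm S;
     dm := idm S; dp1 := idm S; dp2 := idm S |}.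

(* p^{(1)} E^{(2)}_C(Q,M): apply p to the levels Q, M, M x_Q M of E^{(2)}(Q,M)
   and to its structure maps (source = target = rho, identity phi,
   inverse i, composition mu, projections). *)
Definition p1E (O : C) (Q : IGpdOn O) (M : QModule Q) : GData :=
  {| D0 := pOb Q; D1 := pOb (Mod M); D2 := pK M;
     ds := pmap (rho M); dt := pmap (rho M); de := pmap (phi M);
     di := pmap (minv M);
     dm := p_mu M; dp1 := p_pi1 M; dp2 := p_pi2 M |}.

End Internal.


Set Implicit Arguments.

(* Every structure map of E^(2)(Q,M) is an identity-on-objects functor
   between groupoids on Q0, so [p] sends it to the map commuting with the
   quotients of Q0; any two such maps compose to the identity, so [p rho] and
   [p phi] are inverse and [p i] is the identity.  Moreover
   [p(M x_Q M) = p M], because the first projection M x_Q M -> M is split by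
   the diagonal and precomposing source and target with a split epi does not
   change their coequalizer. *)

Lemma is_iso_id (C : Category) (X : C) : is_iso (idm X).
Proof. exists (idm X). split; apply comp_id_l. Qed.

Lemma is_iso_comp (C : Category) (X Y Z : C) (f : Hom X Y) (g : Hom Y Z) :
  is_iso f -> is_iso g -> is_iso (g ⊚ f).
Proof.
  intros [f' [f'f ff']] [g' [g'g gg']]. exists (f' ⊚ g'). split.
  - rewrite comp_assoc, <- (comp_assoc f' g' g), g'g, comp_id_r. exact f'f.
  - rewrite comp_assoc, <- (comp_assoc g f f'), ff', comp_id_r. exact gg'.
Qed.

Lemma kernel_pair_pb1_split (C : Category) (X Z : C) (f : Hom X Z)
    (P : Pullback f f) :
  exists s : Hom X (pb P), pb1 P ⊚ s = idm X.
Proof.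
  destruct (@pb_univ _ _ _ _ _ _ P _ (idm X) (idm X) eq_refl) as [s [[s1 _] _]].
  exists s. exact s1.
Qed.

Section CoequalizerAlongSplitEpi.
Variables (C : Category) (X Y Z : C) (f g : Hom Y Z) (r : Hom X Y).
Hypothesis r_split : exists s : Hom Y X, r ⊚ s = idm Y.
Variables (c : Coequalizer (f ⊚ r) (g ⊚ r)) (c' : Coequalizer f g).

Lemma coeq_map_split_comm : coeq_map c ⊚ f = coeq_map c ⊚ g.
Proof.
  destruct r_split as [s rs].
  rewrite <- (comp_id_r (coeq_map c ⊚ f)), <- (comp_id_r (coeq_map c ⊚ g)), <- rs.
  rewrite !comp_assoc, <- (comp_assoc (coeq_map c) f r),
    <- (comp_assoc (coeq_map c) g r), (coeq_comm c).
  reflexivity.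
Qed.

Lemma coeq_comparison_split_is_iso (h : Hom (coeq c) (coeq c')) :
  h ⊚ coeq_map c = coeq_map c' -> is_iso h.
Proof.
  intro hq.
  set (k := coeq_desc c' coeq_map_split_comm).
  assert (kq : k ⊚ coeq_map c' = coeq_map c) by apply coeq_desc_comm.
  exists k. split.
  - apply (coeq_uniq (c := c)).
    rewrite <- comp_assoc, hq, kq, comp_id_l. reflexivity.
  - apply (coeq_uniq (c := c')).
    rewrite <- comp_assoc, kq, hq, comp_id_l. reflexivity.
Qed.

End CoequalizerAlongSplitEpi.

Section IdentityOnObjects.
Variables (C : Category) (L : FinLimCoeq C) (O : C).

Lemma pmap_coeq_map (A B : IGpdOn L O) (F : IOFunctor A B) :
  pmap F ⊚ coeq_map (pCoeq A) = coeq_map (pCoeq B).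
Proof. apply coeq_desc_comm. Qed.

Lemma pmap_inverse (A B : IGpdOn L O) (F : IOFunctor A B) (G : IOFunctor B A) :
  pmap G ⊚ pmap F = idm (pOb A).
Proof.
  apply (coeq_uniq (c := pCoeq A)).
  rewrite <- comp_assoc, !pmap_coeq_map, comp_id_l. reflexivity.
Qed.

Lemma pmap_is_iso (A B : IGpdOn L O) (F : IOFunctor A B) (G : IOFunctor B A) :
  is_iso (pmap F).
Proof. exists (pmap G). split; apply pmap_inverse. Qed.

Lemma pmap_endo (A : IGpdOn L O) (F : IOFunctor A A) : pmap F = idm (pOb A).
Proof.
  apply (coeq_uniq (c := pCoeq A)).
  rewrite comp_id_l. apply pmap_coeq_map.
Qed.

Lemma pK_to_pM_is_iso (Q : IGpdOn L O) (M : QModule Q) : is_iso (pK_to_pM M).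
Proof.
  apply (coeq_comparison_split_is_iso _ (kernel_pair_pb1_split (KPB M))).
  apply coeq_desc_comm.
Qed.

End IdentityOnObjects.

Theorem corollary3p6 (C : Category) (L : FinLimCoeq C) (Q0 : C)
    (Q : IGpdOn L Q0) (M : QModule Q) :
  GIso (p1E M) (discrete (pOb Q)).
Proof.
  exists (idm _), (pmap (rho M)), (pmap (rho M) ⊚ pK_to_pM M).
  simpl.
  repeat split.
  - apply is_iso_id.
  - exact (pmap_is_iso (rho M) (phi M)).
  - apply is_iso_comp; [apply pK_to_pM_is_iso | exact (pmap_is_iso (rho M) (phi M))].
  - rewrite pmap_inverse, comp_id_l. reflexivity.
  - rewrite pmap_endo, comp_id_l, comp_id_r. reflexivity.
  - symmetry. apply comp_id_l.
  - symmetry. apply comp_id_l.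
  - symmetry. apply comp_id_l.
Qed.
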